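(* Let $\mathcal{X},\mathcal{Y}$ be real Hilbert spaces, $a:\mathcal{X}\times\mathcal{Y}\to\mathbb{R}$ bilinear with $|a(w,v)|\le C_a\|w\|_\mathcal{X}\|v\|_\mathcal{Y}$, $f\in\mathcal{Y}^\star$, and $u\in\mathcal{X}$ with $a(u,v)=f(v)$ for all $v\in\mathcal{Y}$. Let $\ell,N\in\mathbb{N}$ and let $\mathcal{X}_\ell\subseteq\mathcal{X}_{\ell+1}\subseteq\dots\subseteq\mathcal{X}_{\ell+N+1}\subseteq\mathcal{X}$ and $\mathcal{Y}_\ell\subseteq\dots\subseteq\mathcal{Y}_{\ell+N+1}\subseteq\mathcal{Y}$ be finite-dimensional subspaces with $\dim\mathcal{X}_{\ell+k}=\dim\mathcal{Y}_{\ell+k}$ and $\inf_{w\in\mathcal{X}_{\ell+k}}\sup_{v\in\mathcal{Y}_{\ell+k}}\frac{a(w,v)}{\|w\|_\mathcal{X}\|v\|_\mathcal{Y}}\ge\gamma>0$ for $k=0,\dots,N+1$, and let $u_{\ell+k}\in\mathcal{X}_{\ell+k}$ be the unique solutions of $a(u_{\ell+k},v)=f(v)$ for all $v\in\mathcal{Y}_{\ell+k}$. Let $M$ be the block matrix associated with these spaces as in the context. If $M$ has a normalized block-$LU$-factorization $M=LU$, then $$\sum_{k=\ell}^{\ell+N}\|u_{k+1}-u_k\|_\mathcal{X}^2\le\frac{C_a^2}{\gamma^2}\,\|U\|_2^2\max_{k=1,\dots,N+1}\|U^{-1}(:,k)\|_2^2\,\|u-u_\ell\|_\mathcal{X}^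2.$$
   Context: Nested orthonormal basis: let $\mathcal{B}_0^\mathcal{X}$ be an $\mathcal{X}$-orthonormal basis of $\mathcal{X}_\ell$ and, for $j=1,\dots,N+1$, $\mathcal{B}_j^\mathcal{X}$ an $\mathcal{X}$-orthonormal basis of $\{v\in\mathcal{X}_{\ell+j}: v\perp_\mathcal{X}\mathcal{X}_{\ell+j-1}\}$; analogously $\mathcal{B}_j^\mathcal{Y}$ with respect to $\mathcal{Y}$. Enumerate $\bigcup_j\mathcal{B}^\mathcal{X}_j=\{w_1^\mathcal{X},\dots,w_{\rm dim}^\mathcal{X}\}$ (${\rm dim}=\dim\mathcal{X}_{\ell+N+1}$) so that functions of $\mathcal{B}_j^\mathcal{X}$ precede those of $\mathcal{B}_{j+1}^\mathcal{X}$, and likewise $w_r^\mathcal{Y}$. Block structure: $n_0=0$, $n_{j+1}:=\dim\mathcal{X}_{\ell+j}$, $j=0,\dots,N+1$. $M\in\mathbb{R}^{{\rm dim}\times{\rm dim}}$, $M_{rt}:=a(w_t^\mathcal{X},w_r^\mathcal{Y})$. For a block matrix, block $(i,j)$ (indices from $0$) consists of rows $n_i+1,\dots,n_{i+1}$ and columns $n_j+1,\dots,n_{j+1}$; $M(:,j)$ denotes the $j$-th block column. A normalized block-$LU$-factorization is $M=LU$ with $L$ block lower triangular with identity diagonal blocks and $U$ block upper triangular. $\|\cdot\|_2$ is the spectral norm. *)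

From HB Require Import structures.
From mathcomp Require Import all_boot all_order all_algebra.
From mathcomp Require Import all_classical all_reals.
Set Implicit Arguments. Unset Strict Implicit. Unset Printing Implicit Defensive.
Import Order.TTheory GRing.Theory Num.Theory.
Local Open Scope ring_scope.
Local Open Scope classical_set_scope.

Definition inner_product (R : realType) (X : lmodType R) (ip : X -> X -> R) :=
  [/\ forall x y, ip x y = ip y x,
      forall c x y z, ip (c *: x + y) z = c * ip x z + ip y z,
      forall x, 0 <= ip x x &
      forall x, ip x x = 0 -> x = 0].

Definition ipnorm (R : realType) (X : lmodType R) (ip : X -> X -> R) (x : X) : R :=
  Num.sqrt (ip x x).

Definition ip_complete (R : realType) (X : lmodType R) (ip : X -> X -> R) :=
  forall s : nat -> X,
    (forall e : R, 0 < e -> exists M : nat, forall m n, (M <= m)%N -> (M <= n)%N ->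
        ipnorm ip (s m - s n) < e) ->
    exists l : X, forall e : R, 0 < e -> exists M : nat, forall n, (M <= n)%N ->
        ipnorm ip (s n - l) < e.

Definition hilbert (R : realType) (X : lmodType R) (ip : X -> X -> R) :=
  inner_product ip /\ ip_complete ip.

Definition subspace (R : realType) (X : lmodType R) (S : set X) :=
  S 0 /\ forall (c : R) x y, S x -> S y -> S (c *: x + y).

Definition span_of (R : realType) (X : lmodType R) (n : nat) (b : 'I_n -> X) : set X :=
  [set x | exists c : 'I_n -> R, x = \sum_(i < n) c i *: b i].

Definition lin_indep (R : realType) (X : lmodType R) (n : nat) (b : 'I_n -> X) :=
  forall c : 'I_n -> R, \sum_(i < n) c i *: b i = 0 -> forall i, c i = 0.

Definition has_dim (R : realType) (X : lmodType R) (S : set X) (n : nat) :=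
  subspace S /\ exists b : 'I_n -> X, lin_indep b /\ span_of b = S.

Definition infsup_ge (R : realType) (X Y : lmodType R)
  (ipX : X -> X -> R) (ipY : Y -> Y -> R) (a : X -> Y -> R)
  (Xk : set X) (Yk : set Y) (g : R) :=
  forall w, Xk w -> w != 0 ->
    g <= sup [set a w v / (ipnorm ipX w * ipnorm ipY v) | v in [set v | Yk v /\ v != 0]].

(* d k = dim X_{l+k};  n_0 = 0, n_{j+1} = d j *)
Definition blk_start (d : nat -> nat) (j : nat) : nat :=
  if j is j'.+1 then d j' else 0%N.

(* index r (0-based) belongs to block j: n_j <= r < n_{j+1} *)
Definition in_block (d : nat -> nat) (j r : nat) : bool :=
  (blk_start d j <= r < blk_start d j.+1)%N.

Definition orth_part (R : realType) (X : lmodType R) (ip : X -> X -> R)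
  (Xs : nat -> set X) (l j : nat) : set X :=
  if j is j'.+1 then [set v | Xs (l + j)%N v /\ forall x, Xs (l + j')%N x -> ip v x = 0]
  else Xs l.

(* w enumerates the union of the orthonormal bases B_0, ..., B_{N+1}, block by block:
   the entries with index in block j form an orthonormal basis of orth_part j. *)
Definition nested_onb (R : realType) (X : lmodType R) (ip : X -> X -> R)
  (Xs : nat -> set X) (l N : nat) (d : nat -> nat) (w : 'I_(d N.+1) -> X) :=
  forall j, (j <= N.+1)%N ->
    (forall r s : 'I_(d N.+1), in_block d j r -> in_block d j s ->
        ip (w r) (w s) = (r == s)%:R) /\
    orth_part ip Xs l j =
      [set x | exists c : 'I_(d N.+1) -> R,
                 (forall r : 'I_(d N.+1), ~~ in_block d j r -> c r = 0) /\
                 x = \sum_(r < d N.+1) c r *: w r].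

Definition galerkin_matrix (R : realType) (X Y : lmodType R) (a : X -> Y -> R)
  (n : nat) (wX : 'I_n -> X) (wY : 'I_n -> Y) : 'M[R]_n :=
  \matrix_(r < n, t < n) a (wX t) (wY r).

Definition block_lower_unit (R : realType) (d : nat -> nat) (N : nat) (L : 'M[R]_(d N.+1)) :=
  forall (i j : nat) (r t : 'I_(d N.+1)), (i <= N.+1)%N -> (j <= N.+1)%N ->
    in_block d i r -> in_block d j t ->
    ((i < j)%N -> L r t = 0) /\ (i = j -> L r t = (r == t)%:R).

Definition block_upper (R : realType) (d : nat -> nat) (N : nat) (U : 'M[R]_(d N.+1)) :=
  forall (i j : nat) (r t : 'I_(d N.+1)), (i <= N.+1)%N -> (j <= N.+1)%N ->
    in_block d i r -> in_block d j t -> (j < i)%N -> U r t = 0.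

Definition vnorm (R : realType) (n : nat) (x : 'cV[R]_n) : R :=
  Num.sqrt (\sum_(i < n) x i 0 ^+ 2).

Definition specnorm (R : realType) (m n : nat) (A : 'M[R]_(m, n)) : R :=
  sup [set vnorm (A *m x) | x in [set x : 'cV[R]_n | vnorm x <= 1]].

(* the k-th block column A(:,k): columns n_k+1 .. n_{k+1} (1-based) *)
Definition block_col (R : realType) (d : nat -> nat) (m n : nat) (A : 'M[R]_(m, n)) (k : nat)
  : 'M[R]_(m, blk_start d k.+1 - blk_start d k) :=
  \matrix_(r < m, j < blk_start d k.+1 - blk_start d k)
    match [pick t : 'I_n | val t == (blk_start d k + j)%N] with
    | Some t => A r t
    | None => 0
    end.

Arguments nested_onb {R X} ip Xs l N d w.
Arguments block_lower_unit {R} d N L.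
Arguments block_upper {R} d N U.
Arguments block_col {R} d {m n} A k.

(* Write every Galerkin solution u_(l+k) in the nested orthonormal basis wX: its
   coordinate vector c_k is supported in the first d k = dim X_(l+k) entries, and
   x |-> c is an isometry, so ||u_(l+k+1) - u_(l+k)|| = |c_(k+1) - c_k|.  The
   Galerkin equations say that M c_k agrees with the load vector b on the first d k
   rows.  Since M = L U with L block lower unit triangular and U block upper
   triangular, forward substitution gives U c_k = trunc_k g with g = L^-1 b.  Hence
   c_(k+1) - c_k = U^-1(:, k+1) g_(k+1) is the (k+1)-th block column of U^-1 applied
   to the (k+1)-th block of g, and summing over k bounds the left-hand side by
   max_k ||U^-1(:,k)||^2 |g off block 0|^2 = max_k ||U^-1(:,k)||^2 |U (c_(N+1) - c_0)|^2.
   Finally |c_(N+1) - c_0| = ||u_(l+N+1) - u_l|| <= (C_a / gamma) ||u - u_l|| by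
   Galerkin quasi-optimality on X_(l+N+1). *)

From HB Require Import structures.
From mathcomp Require Import all_boot all_order all_algebra.
From mathcomp Require Import all_classical all_reals.
From mathcomp Require Import ring lra zify.
Import Order.TTheory GRing.Theory Num.Theory.
Local Open Scope ring_scope.
Local Open Scope classical_set_scope.

Set Implicit Arguments. Unset Strict Implicit. Unset Printing Implicit Defensive.

Section LinearMaps.
Variables (R : realType) (X : lmodType R) (h : X -> R).
Hypothesis h_lin : forall (c : R) x y, h (c *: x + y) = c * h x + h y.

Lemma lin0 : h 0 = 0.
Proof. by have := h_lin 1 0 0; rewrite scale1r addr0 mul1r => H; lra. Qed.

Lemma linD x y : h (x + y) = h x + h y.
Proof. by rewrite -[x]scale1r h_lin mul1r scale1r. Qed.

Lemma linZ c x : h (c *: x) = c * h x.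
Proof. by rewrite -[c *: x]addr0 h_lin lin0 addr0. Qed.

Lemma linB x y : h (x - y) = h x - h y.
Proof. by rewrite linD -scaleN1r linZ mulN1r. Qed.

Lemma lin_sum (I : finType) (c : I -> R) (w : I -> X) :
  h (\sum_i c i *: w i) = \sum_i c i * h (w i).
Proof. by rewrite (big_morph h linD lin0); apply: eq_bigr => i _; apply: linZ. Qed.
End LinearMaps.

Section InnerProduct.
Variables (R : realType) (X : lmodType R) (ip : X -> X -> R).
Hypothesis ip_inner : inner_product ip.

Lemma ipC x y : ip x y = ip y x.
Proof. by case: ip_inner. Qed.

Lemma ipl z : forall (c : R) x y, ip (c *: x + y) z = c * ip x z + ip y z.
Proof. by move=> c x y; case: ip_inner => _ H _ _; apply: H. Qed.

Lemma ipr z : forall (c : R) x y, ip z (c *: x + y) = c * ip z x + ip z y.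
Proof. by move=> c x y; rewrite !(ipC z) ipl. Qed.

Lemma ip_ge0 x : 0 <= ip x x.
Proof. by case: ip_inner. Qed.

Lemma ipnorm_sq x : ipnorm ip x ^+ 2 = ip x x.
Proof. by rewrite /ipnorm sqr_sqrtr // ip_ge0. Qed.

Lemma ipnorm0 : ipnorm ip 0 = 0.
Proof. by rewrite /ipnorm (lin0 (ipl 0)) sqrtr0. Qed.

Lemma ipnorm_gt0 x : x != 0 -> 0 < ipnorm ip x.
Proof.
move=> nx; rewrite lt_neqAle sqrtr_ge0 andbT eq_sym sqrtr_eq0 -ltNge.
rewrite lt_neqAle ip_ge0 andbT; apply: contra nx => /eqP H.
by apply/eqP; case: ip_inner => _ _ _; apply.
Qed.
End InnerProduct.

Section Subspace.
Variables (R : realType) (X : lmodType R) (S : set X).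
Hypothesis S_sub : subspace S.

Lemma sub0 : S 0. Proof. by case: S_sub. Qed.

Lemma subD x y : S x -> S y -> S (x + y).
Proof. by case: S_sub => _ H Sx Sy; rewrite -[x]scale1r; apply: H. Qed.

Lemma subZ c x : S x -> S (c *: x).
Proof. by case: S_sub => S0 H Sx; rewrite -[_ *: _]addr0; apply: H. Qed.

Lemma subB x y : S x -> S y -> S (x - y).
Proof. by move=> Sx Sy; rewrite -scaleN1r; apply: subD => //; apply: subZ. Qed.

Lemma sub_sum (I : finType) (c : I -> R) (w : I -> X) :
  (forall i, c i = 0 \/ S (w i)) -> S (\sum_i c i *: w i).
Proof.
move=> Hw; apply: (big_ind S); [exact: sub0 | exact: subD | move=> i _].
by case: (Hw i) => [->|?]; [rewrite scale0r; apply: sub0 | apply: subZ].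
Qed.
End Subspace.

(* dimension is monotone under inclusion: the coordinates of a basis of S in a
   basis of T form a row-free m x n matrix *)
Lemma dim_le (R : realType) (X : lmodType R) (S T : set X) m n :
  S `<=` T -> has_dim S m -> has_dim T n -> (m <= n)%N.
Proof.
move=> ST [_ [b [bi bs]]] [_ [b' [_ bs']]].
have /choice [C HC] : forall i, exists c : 'I_n -> R, b i = \sum_(j < n) c j *: b' j.
  move=> i; suff : T (b i) by rewrite -bs' => -[c ->]; exists c.
  apply: ST; rewrite -bs; exists (fun j => (j == i)%:R).
  rewrite (bigD1 i) //= eqxx scale1r big1 ?addr0 // => j /negbTE ->.
  by rewrite scale0r.
pose A : 'M[R]_(m, n) := \matrix_(i, j) C i j.
suff /eqP <- : row_free A by apply: rank_leq_col.
apply: inj_row_free => v Hv; apply/rowP => i; rewrite mxE.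
apply: (bi (fun i => v 0 i)).
transitivity (\sum_(j < n) (v *m A) 0 j *: b' j); last first.
  by rewrite Hv big1 // => j _; rewrite mxE scale0r.
under eq_bigr => i' _ do rewrite HC scaler_sumr.
rewrite exchange_big /=; apply: eq_bigr => j _; rewrite mxE scaler_suml.
by apply: eq_bigr => i' _; rewrite mxE scalerA.
Qed.

Section Norms.
Variable R : realType.

Lemma vnorm_sq n (x : 'cV[R]_n) : vnorm x ^+ 2 = \sum_i x i 0 ^+ 2.
Proof. by rewrite /vnorm sqr_sqrtr // sumr_ge0 // => i _; apply: sqr_ge0. Qed.

Lemma vnormZ n c (x : 'cV[R]_n) : vnorm (c *: x) = `|c| * vnorm x.
Proof.
rewrite /vnorm; under eq_bigr do rewrite mxE exprMn.
by rewrite -mulr_sumr sqrtrM ?sqr_ge0 // sqrtr_sqr.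
Qed.

Lemma vnorm_eq0 n (x : 'cV[R]_n) : vnorm x = 0 -> x = 0.
Proof.
move=> /eqP; rewrite sqrtr_eq0 => H.
have H0 : \sum_i x i 0 ^+ 2 = 0.
  by apply/eqP; rewrite eq_le H sumr_ge0 // => i _; apply: sqr_ge0.
apply/matrixP => i j; rewrite ord1 mxE.
have := psumr_eq0P (fun i _ => sqr_ge0 (x i 0)) H0 (i := i) isT.
by move/eqP; rewrite sqrf_eq0 => /eqP.
Qed.

Lemma coord_le n (x : 'cV[R]_n) j : x j 0 ^+ 2 <= vnorm x ^+ 2.
Proof.
by rewrite vnorm_sq (bigD1 j) //= lerDl sumr_ge0 // => i _; apply: sqr_ge0.
Qed.

(* the set defining the spectral norm is bounded, by the row sums of |A| *)
Lemma specnorm_ubound m n (A : 'M[R]_(m, n)) :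
  has_ubound [set vnorm (A *m x) | x in [set x : 'cV[R]_n | vnorm x <= 1]].
Proof.
exists (Num.sqrt (\sum_i (\sum_j `|A i j|) ^+ 2)) => _ [x /= Hx <-].
rewrite /vnorm ler_sqrt; last by apply: sumr_ge0 => i _; apply: sqr_ge0.
apply: ler_sum => i _.
have Hxj j : `|x j 0| <= 1.
  have := coord_le x j; have := sqrtr_ge0 (\sum_i x i 0 ^+ 2).
  rewrite -/(vnorm x) ler_norml => ? ?; apply/andP; split; nra.
have : `|(A *m x) i 0| <= \sum_j `|A i j|.
  rewrite mxE; apply: le_trans (ler_norm_sum _ _ _) _.
  by apply: ler_sum => j _; rewrite normrM ler_piMr.
rewrite ler_norml => /andP [? ?]; nra.
Qed.

Lemma spec_bound m n (A : 'M[R]_(m, n)) x : vnorm (A *m x) <= specnorm A * vnorm x.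
Proof.
have [x0|xn0] := eqVneq (vnorm x) 0.
  rewrite x0 mulr0 (vnorm_eq0 x0) mulmx0 /vnorm big1 ?sqrtr0 // => i _.
  by rewrite mxE expr2 mulr0.
have xp : 0 < vnorm x by rewrite lt_neqAle eq_sym xn0 sqrtr_ge0.
have : vnorm (A *m ((vnorm x)^-1 *: x)) <= specnorm A.
  apply: ub_le_sup; first exact: specnorm_ubound.
  exists ((vnorm x)^-1 *: x) => //=.
  by rewrite vnormZ ger0_norm ?invr_ge0 ?sqrtr_ge0 // mulVf.
rewrite -scalemxAr vnormZ ger0_norm ?invr_ge0 ?sqrtr_ge0 //.
by rewrite ler_pdivrMl // mulrC.
Qed.

Lemma spec_bound_sq m n (A : 'M[R]_(m, n)) x :
  vnorm (A *m x) ^+ 2 <= specnorm A ^+ 2 * vnorm x ^+ 2.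
Proof.
rewrite -exprMn; have := spec_bound A x; have := sqrtr_ge0 (\sum_i (A *m x) i 0 ^+ 2).
rewrite -/(vnorm _) => ? ?; nra.
Qed.
End Norms.

Definition zext (R : realType) n (F : 'I_n -> R) (m : nat) : R :=
  match [pick t : 'I_n | val t == m] with Some t => F t | None => 0 end.

Lemma zext_ord (R : realType) n (F : 'I_n -> R) (t : 'I_n) : zext F t = F t.
Proof.
by rewrite /zext; case: pickP => [t' /eqP /val_inj -> //|/(_ t)]; rewrite eqxx.
Qed.

Lemma zext_sq (R : realType) n (F : 'I_n -> R) m :
  zext (fun t => F t ^+ 2) m = zext F m ^+ 2.
Proof. by rewrite /zext; case: pickP => // _; rewrite expr2 mulr0. Qed.

Lemma sum_window (R : realType) n (F : 'I_n -> R) lo hi :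
  (lo <= hi)%N -> (hi <= n)%N ->
  \sum_(t < n) (if (lo <= t < hi)%N then F t else 0) = \sum_(lo <= m < hi) zext F m.
Proof.
move=> lh hn.
transitivity (\sum_(0 <= m < n) (if (lo <= m < hi)%N then zext F m else 0)).
  by rewrite big_mkord; apply: eq_bigr => t _; rewrite zext_ord.
rewrite (big_cat_nat (n := lo)) ?(leq_trans lh hn) //=.
rewrite [X in _ + X](big_cat_nat (n := hi)) //=.
rewrite big1_seq ?add0r; last first.
  by move=> m /andP [_]; rewrite mem_index_iota => /andP [_ mlo]; rewrite leqNgt mlo.
rewrite [X in _ + X]big1_seq ?addr0; last first.
  by move=> m /andP [_]; rewrite mem_index_iota => /andP [hm _]; rewrite ltnNge hm andbF.
by rewrite big_nat_cond [RHS]big_nat_cond; apply: eq_bigr => m /andP [-> _].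
Qed.

Lemma sum_shift (R : realType) (E : nat -> R) lo hi :
  \sum_(j < hi - lo) E (lo + j)%N = \sum_(lo <= m < hi) E m.
Proof.
rewrite -[in RHS](add0n lo) big_addn big_mkord.
by apply: eq_bigr => j _; rewrite addnC.
Qed.

Lemma telescope_windows (R : realType) (d : nat -> nat) (e : nat -> R) K :
  (forall i j, (i <= j)%N -> (j <= K)%N -> (d i <= d j)%N) ->
  \sum_(k < K) \sum_(d k <= m < d k.+1) e m = \sum_(d 0 <= m < d K) e m.
Proof.
elim: K => [|K IH] Hm; first by rewrite big_ord0 big_geq.
rewrite big_ord_recr /= IH; last by move=> i j ij jK; apply: Hm => //; apply: leqW.
by rewrite [RHS](big_cat_nat (n := d K)) // Hm.
Qed.

Lemma block_of (N : nat) (d : nat -> nat) (r : nat) : (r < d N.+1)%N -> exists2 j, (j <= N.+1)%N & in_block d j r.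
Proof.
move=> rN.
suff : forall m, (m <= N.+1)%N -> (r < d m)%N -> exists2 j, (j <= m)%N & in_block d j r.
  by move=> /(_ N.+1 (leqnn _) rN) [j jm H]; exists j.
elim => [|m IH] mN rm; first by exists 0%N => //; rewrite /in_block /= rm.
case: (ltnP r (d m)) => rdm; last by exists m.+1 => //; rewrite /in_block /= rdm.
by case: (IH (ltnW mN) rdm) => j jm H; exists j => //; apply: leqW.
Qed.

Section BlockIndex.
Variables (N : nat) (d : nat -> nat).
Hypothesis d_mono : forall i j, (i <= j)%N -> (j <= N.+1)%N -> (d i <= d j)%N.

Lemma block_le j k (r : nat) : (j <= N.+1)%N -> in_block d j r ->
  (r < d k)%N -> (j <= k)%N.
Proof.
rewrite /in_block; case: j => [//|j] jN /andP [/= Hr _] rk.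
rewrite leqNgt; apply/negP => kj.
by have := d_mono (kj : (k <= j)%N) (ltnW jN); lia.
Qed.

Lemma block_gt j k (r : nat) : (k <= N.+1)%N -> in_block d j r ->
  (d k <= r)%N -> (k < j)%N.
Proof.
move=> kN; rewrite /in_block => /andP [_ /= Hr] kr.
rewrite ltnNge; apply/negP => jk.
by have := d_mono jk kN; lia.
Qed.
End BlockIndex.

Definition block_vec (R : realType) (d : nat -> nat) n (x : 'cV[R]_n) (k : nat)
  : 'cV[R]_(blk_start d k.+1 - blk_start d k) :=
  \col_j zext (fun t => x t 0) (blk_start d k + j).

Lemma block_col_mul (R : realType) (d : nat -> nat) n (V : 'M[R]_n) (x : 'cV[R]_n) k :
  (blk_start d k <= blk_start d k.+1)%N -> (blk_start d k.+1 <= n)%N ->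
  V *m \col_t (if in_block d k t then x t 0 else 0) = block_col d V k *m block_vec d x k.
Proof.
move=> lh hn; apply/matrixP => r c; rewrite ord1 !mxE.
under eq_bigr do rewrite mxE.
rewrite (eq_bigr (fun t : 'I_n => if in_block d k t then V r t * x t 0 else 0));
  last by move=> t _; case: ifP; rewrite ?mulr0.
rewrite (sum_window (fun t => V r t * x t 0) lh hn).
under [RHS]eq_bigr do rewrite !mxE.
rewrite -sum_shift; apply: eq_bigr => j _; rewrite /zext.
by case: pickP => [t _|_] //; rewrite mul0r.
Qed.

Lemma block_vec_sqnorm (R : realType) (d : nat -> nat) n (x : 'cV[R]_n) k :
  vnorm (block_vec d x k) ^+ 2
  = \sum_(blk_start d k <= m < blk_start d k.+1) zext (fun t => x t 0) m ^+ 2.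
Proof.
rewrite vnorm_sq; under eq_bigr do rewrite mxE.
exact: (sum_shift (fun m => zext (fun t => x t 0) m ^+ 2)).
Qed.

Section BlockMatrices.
Variables (R : realType) (N : nat) (d : nat -> nat).
Hypothesis d_mono : forall i j, (i <= j)%N -> (j <= N.+1)%N -> (d i <= d j)%N.
Local Notation n := (d N.+1).

Definition trunc k (x : 'cV[R]_n) : 'cV[R]_n := \col_r (if (r < d k)%N then x r 0 else 0).

Lemma lower_zero (L : 'M[R]_n) k (r t : 'I_n) : block_lower_unit d N L ->
  (k <= N.+1)%N -> (r < d k)%N -> (d k <= t)%N -> L r t = 0.
Proof.
move=> HL kN rk kt.
have [i iN bi] := block_of (ltn_ord r); have [j jN bj] := block_of (ltn_ord t).
have ik := block_le d_mono iN bi rk; have kj := block_gt d_mono kN bj kt.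
have [H _] := HL i j r t iN jN bi bj; exact: H (leq_ltn_trans ik kj).
Qed.

Lemma upper_zero (U : 'M[R]_n) k (r t : 'I_n) : block_upper d N U ->
  (k <= N.+1)%N -> (t < d k)%N -> (d k <= r)%N -> U r t = 0.
Proof.
move=> HU kN tk kr.
have [i iN bi] := block_of (ltn_ord r); have [j jN bj] := block_of (ltn_ord t).
have jk := block_le d_mono jN bj tk; have ki := block_gt d_mono kN bi kr.
exact: (HU i j r t iN jN bi bj (leq_ltn_trans jk ki)).
Qed.

(* forward substitution: a block lower unit triangular L is injective on vectors
   supported in the first d k coordinates, looking only at the first d k rows *)
Lemma lower_unit_inj (L : 'M[R]_n) k (z : 'cV[R]_n) : block_lower_unit d N L ->
  (k <= N.+1)%N -> (forall t : 'I_n, (d k <= t)%N -> z t 0 = 0) ->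
  (forall r : 'I_n, (r < d k)%N -> (L *m z) r 0 = 0) -> z = 0.
Proof.
move=> HL kN Hz HLz.
suff H j : (j <= k.+1)%N -> forall t : 'I_n, (t < blk_start d j)%N -> z t 0 = 0.
  apply/matrixP => t c; rewrite ord1 mxE.
  by case: (ltnP t (d k)) => tk; [apply: (H k.+1 (leqnn _)) | apply: Hz].
elim: j => [|j IH] jk t //.
have jN : (j <= N.+1)%N by lia.
have {}IH := IH (ltnW jk).
have Hblk (r : 'I_n) : in_block d j r -> z r 0 = 0.
  move=> br; have rdk : (r < d k)%N.
    by move: br => /andP [_ /= ?]; have := d_mono (jk : (j <= k)%N) kN; lia.
  rewrite -(HLz r rdk) mxE (bigD1 r) //= big1 ?addr0.
    by have [_ ->] := HL j j r r jN jN br br; rewrite // eqxx mul1r.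
  move=> s sr; have [i iN bi] := block_of (ltn_ord s).
  case: (ltngtP i j) => [ij|ji|eij].
  - rewrite IH ?mulr0 //; move: bi => /andP [_ si].
    case: j ij jk jN br IH => [//|j'] ij _ jN _ _ /=.
    by have := d_mono (ij : (i <= j')%N) (ltnW jN); move: si => /=; lia.
  - by have [H _] := HL j i r s jN iN br bi; rewrite H ?mul0r.
  - move: bi; rewrite eij => bi.
    by have [_ ->] := HL j j r s jN jN br bi; rewrite // eq_sym (negbTE sr) mul0r.
case: (ltnP t (blk_start d j)) => tb tj; first exact: IH.
by apply: Hblk; rewrite /in_block tb.
Qed.

(* This is the matrix form of the nested Galerkin systems. *)
Lemma block_LU_solve (L U : 'M[R]_n) k (c b : 'cV[R]_n) :
  block_lower_unit d N L -> block_upper d N U -> L \in unitmx -> (k <= N.+1)%N ->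
  (forall t : 'I_n, (d k <= t)%N -> c t 0 = 0) ->
  (forall r : 'I_n, (r < d k)%N -> (L *m U *m c) r 0 = b r 0) ->
  U *m c = trunc k (invmx L *m b).
Proof.
move=> HL HU Lu kN Hc Hb; apply/eqP; rewrite -subr_eq0; apply/eqP.
apply: (lower_unit_inj HL kN).
  move=> t kt; rewrite !mxE ltnNge kt subr0 big1 // => s _.
  case: (ltnP s (d k)) => sk; first by rewrite (upper_zero HU kN sk kt) mul0r.
  by rewrite Hc // mulr0.
move=> r rk; rewrite mulmxBr mulmxA [LHS]mxE [X in _ + X]mxE Hb //.
suff -> : (L *m trunc k (invmx L *m b)) r 0 = b r 0 by rewrite subrr.
rewrite -{2}[b](mulKVmx Lu) mxE [RHS]mxE; apply: eq_bigr => t _; rewrite mxE.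
by case: ltnP => // kt; rewrite (lower_zero HL kN rk kt) !mul0r.
Qed.

Lemma trunc_diff k (x : 'cV[R]_n) : (k <= N)%N ->
  trunc k.+1 x - trunc k x = \col_t (if in_block d k.+1 t then x t 0 else 0).
Proof.
move=> kN; apply/matrixP => t c; rewrite !mxE /in_block /=.
case: (ltnP t (d k)) => tk /=; last by rewrite subr0.
by rewrite (leq_trans tk (d_mono (leqnSn k) kN)) subrr.
Qed.

Lemma trunc_window_sqnorm (x : 'cV[R]_n) :
  vnorm (trunc N.+1 x - trunc 0 x) ^+ 2 = \sum_(d 0 <= m < n) zext (fun t => x t 0) m ^+ 2.
Proof.
under eq_bigr do rewrite -zext_sq.
rewrite vnorm_sq -(sum_window (fun t => x t 0 ^+ 2) (d_mono (leq0n _) (leqnn _)) (leqnn n)).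
apply: eq_bigr => t _; rewrite !mxE ltn_ord.
by case: (ltnP t (d 0)) => tk; rewrite /= ?subrr ?subr0 ?expr2 ?mulr0.
Qed.

Lemma block_sum_bound (V : 'M[R]_n) (x : 'cV[R]_n) :
  \sum_(k < N.+1) vnorm (V *m (trunc k.+1 x - trunc k x)) ^+ 2
  <= (\big[Num.max/0]_(1 <= k < N.+2) specnorm (block_col d V k) ^+ 2)
     * vnorm (trunc N.+1 x - trunc 0 x) ^+ 2.
Proof.
set Mx := \big[Num.max/0]_(1 <= k < N.+2) _.
have Mx_ge (k : 'I_N.+1) : specnorm (block_col d V k.+1) ^+ 2 <= Mx.
  by apply: (le_bigmax_seq _ k.+1) => //; rewrite mem_index_iota /= ltnS ltn_ord.
have Mx0 : 0 <= Mx := bigmax_ge_id _ _ _ _.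
apply: le_trans (_ : \sum_(k < N.+1) Mx * vnorm (block_vec d x k.+1) ^+ 2 <= _).
  apply: ler_sum => k _.
  have kN : (k <= N)%N := ltn_ord k.
  have dk : (d k <= d k.+1)%N := d_mono (leqnSn k) kN.
  rewrite (trunc_diff _ kN) (@block_col_mul R d _ V x k.+1 dk (d_mono (ltn_ord k) (leqnn _))).
  by apply: le_trans (spec_bound_sq _ _) _; rewrite ler_wpM2r ?sqr_ge0.
rewrite -mulr_sumr trunc_window_sqnorm ler_wpM2l //.
under eq_bigr do rewrite block_vec_sqnorm /=.
by rewrite (telescope_windows (fun m => zext (fun t => x t 0) m ^+ 2) d_mono).
Qed.
End BlockMatrices.

Section NestedSpaces.
Variables (R : realType) (X : lmodType R) (Xs : nat -> set X) (l N : nat) (d : nat -> nat).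
Hypothesis Xs_dim : forall k, (k <= N.+1)%N -> has_dim (Xs (l + k)%N) (d k).
Hypothesis Xs_nest : forall k, (k <= N)%N -> Xs (l + k)%N `<=` Xs (l + k.+1)%N.

Lemma nest_le i j : (i <= j)%N -> (j <= N.+1)%N -> Xs (l + i)%N `<=` Xs (l + j)%N.
Proof.
elim: j => [|j IH]; first by rewrite leqn0 => /eqP -> _ x.
rewrite leq_eqVlt => /orP [/eqP -> _ x //|]; rewrite ltnS => ij jN x Hx.
exact: (Xs_nest jN (IH ij (ltnW jN) x Hx)).
Qed.

Lemma dim_mono i j : (i <= j)%N -> (j <= N.+1)%N -> (d i <= d j)%N.
Proof.
move=> ij jN; apply: (dim_le (nest_le ij jN)); apply: Xs_dim => //.
exact: leq_trans jN.
Qed.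
End NestedSpaces.

Section NestedBasis.
Variables (R : realType) (X : lmodType R) (ip : X -> X -> R).
Hypothesis ip_inner : inner_product ip.
Variables (Xs : nat -> set X) (l N : nat) (d : nat -> nat) (w : 'I_(d N.+1) -> X).
Hypothesis Xs_dim : forall k, (k <= N.+1)%N -> has_dim (Xs (l + k)%N) (d k).
Hypothesis Xs_nest : forall k, (k <= N)%N -> Xs (l + k)%N `<=` Xs (l + k.+1)%N.
Hypothesis w_onb : nested_onb ip Xs l N d w.
Local Notation n := (d N.+1).

Let Xs_sub k : (k <= N.+1)%N -> subspace (Xs (l + k)%N).
Proof. by move=> /Xs_dim []. Qed.

Let d_mono := dim_mono Xs_dim Xs_nest.

Lemma w_orth j (r : 'I_n) : (j <= N.+1)%N -> in_block d j r -> orth_part ip Xs l j (w r).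
Proof.
move=> jN br; have [_ ->] := w_onb jN; exists (fun s => (s == r)%:R); split.
  by move=> s; case: eqP => // ->; rewrite br.
by rewrite (bigD1 r) //= eqxx scale1r big1 ?addr0 // => s /negbTE ->; rewrite scale0r.
Qed.

Lemma w_in j (r : 'I_n) : (j <= N.+1)%N -> in_block d j r -> Xs (l + j)%N (w r).
Proof.
move=> jN br; have := w_orth jN br.
by case: j jN br => [|j] jN br /=; [rewrite addn0 | case].
Qed.

Lemma w_in_k k (r : 'I_n) : (k <= N.+1)%N -> (r < d k)%N -> Xs (l + k)%N (w r).
Proof.
move=> kN rk; have [j jN br] := block_of (ltn_ord r).
by apply: (nest_le Xs_nest (block_le d_mono jN br rk) kN); apply: w_in.
Qed.

Lemma w_orth_lt i j (r s : 'I_n) : (i < j)%N -> (j <= N.+1)%N ->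
  in_block d i r -> in_block d j s -> ip (w r) (w s) = 0 /\ r != s.
Proof.
move=> ij jN bi bj; split.
  rewrite ipC //; have := w_orth jN bj; case: j ij jN bj => [//|j] ij jN bj [_]; apply.
  by apply: (nest_le Xs_nest (ij : (i <= j)%N) (ltnW jN)); apply: w_in => //; lia.
apply/eqP => rs; subst s.
have : (j <= i)%N by apply: (block_le d_mono jN bj); case/andP: bi.
by lia.
Qed.

Lemma w_orthonormal (r s : 'I_n) : ip (w r) (w s) = (r == s)%:R.
Proof.
have [i iN bi] := block_of (ltn_ord r); have [j jN bj] := block_of (ltn_ord s).
case: (ltngtP i j) => [ij|ji|eij].
- by have [-> /negbTE ->] := w_orth_lt ij jN bi bj.
- have [H /negbTE rs] := w_orth_lt ji iN bj bi.
  by rewrite ipC // H eq_sym rs.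
- by subst j; have [H _] := w_onb iN; apply: H.
Qed.

Lemma coef_rep (c : 'I_n -> R) r : ip (\sum_s c s *: w s) (w r) = c r.
Proof.
rewrite (lin_sum (ipl ip_inner (w r))) (bigD1 r) //= w_orthonormal eqxx mulr1.
by rewrite big1 ?addr0 // => s /negbTE sr; rewrite w_orthonormal sr mulr0.
Qed.

Lemma sqnorm_coef (c : 'I_n -> R) :
  ip (\sum_s c s *: w s) (\sum_s c s *: w s) = \sum_s c s ^+ 2.
Proof.
by rewrite (lin_sum (ipr ip_inner _)); apply: eq_bigr => s _; rewrite coef_rep expr2.
Qed.

Definition coords k (x : X) : 'cV[R]_n := \col_r (if (r < d k)%N then ip x (w r) else 0).

Let coords_of_sum k (c : 'I_n -> R) x :
  x = \sum_s c s *: w s -> (forall r : 'I_n, (d k <= r)%N -> c r = 0) ->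
  x = \sum_r coords k x r 0 *: w r.
Proof.
move=> xE Hc; rewrite {1}xE; apply: eq_bigr => r _; congr (_ *: _).
by rewrite mxE xE coef_rep; case: ltnP => // /Hc.
Qed.

(* every x in X_(l+k) is expanded in the first d k basis vectors; by induction on k,
   the part of x orthogonal to X_(l+k-1) lies in the k-th orthogonal block *)
Lemma coords_expand k x : (k <= N.+1)%N -> Xs (l + k)%N x ->
  x = \sum_r coords k x r 0 *: w r.
Proof.
elim: k x => [|k IH] x kN.
  rewrite addn0 => Hx; have [_ E] := w_onb (leq0n N.+1).
  have : orth_part ip Xs l 0 x by [].
  rewrite E => -[c [Hc xE]]; apply: (coords_of_sum xE) => r rd; apply: Hc.
  by rewrite /in_block /= ltnNge rd.
move=> Hx; pose p := \sum_r coords k x r 0 *: w r.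
have kN' : (k <= N.+1)%N by apply: ltnW.
have Hp : Xs (l + k.+1)%N p.
  apply: sub_sum; first exact: Xs_sub.
  move=> r; rewrite mxE; case: ifP => rk; [right | by left].
  by apply: (nest_le Xs_nest (leqnSn k) kN); apply: w_in_k.
have : orth_part ip Xs l k.+1 (x - p).
  split; first by apply: subB => //; apply: Xs_sub.
  move=> z /(IH z kN') ->; rewrite (lin_sum (ipr ip_inner _)) big1 // => s _.
  rewrite mxE; case: ifP => sk; last by rewrite mul0r.
  by rewrite (linB (ipl ip_inner (w s))) coef_rep mxE sk subrr mulr0.
have [_ ->] := w_onb kN => -[c [Hc yE]].
have xE : x = \sum_r (coords k x r 0 + c r) *: w r.
  under eq_bigr do rewrite scalerDl.
  by rewrite big_split /= -yE /p addrC subrK.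
apply: (coords_of_sum xE) => r rd; rewrite mxE Hc.
  case: ifP => rk; last by rewrite addr0.
  by have := d_mono (leqnSn k) kN; lia.
by rewrite /in_block /= negb_and -leqNgt rd orbT.
Qed.

Lemma coords_isometry i j x y : (i <= N.+1)%N -> (j <= N.+1)%N ->
  Xs (l + i)%N x -> Xs (l + j)%N y ->
  ipnorm ip (x - y) ^+ 2 = vnorm (coords i x - coords j y) ^+ 2.
Proof.
move=> iN jN Hx Hy; rewrite ipnorm_sq // vnorm_sq.
rewrite {1 2}(coords_expand iN Hx) {1 2}(coords_expand jN Hy) -sumrB.
under eq_bigr do rewrite -scalerBl.
by rewrite sqnorm_coef; apply: eq_bigr => r _; rewrite !mxE.
Qed.
End NestedBasis.

Lemma sup_le_ubound (R : realType) (S : set R) (K g : R) :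
  (forall x, S x -> x <= K) -> g <= sup S -> 0 < g -> g <= K.
Proof.
move=> HK gs g0; case: (pselect (exists x, S x)) => [[x Sx]|HS]; last first.
  have S0 : S = set0 by apply/seteqP; split => x // Sx; apply: HS; exists x.
  by move: gs; rewrite S0 sup0 => ?; lra.
by apply: le_trans gs _; apply: ge_sup; [exists x | move=> y /HK].
Qed.

Section Galerkin.
Variables (R : realType) (X Y : lmodType R) (ipX : X -> X -> R) (ipY : Y -> Y -> R).
Hypotheses (ipX_inner : inner_product ipX) (ipY_inner : inner_product ipY).
Variables (a : X -> Y -> R) (Ca : R).
Hypothesis a_linl : forall (c : R) w1 w2 v, a (c *: w1 + w2) v = c * a w1 v + a w2 v.
Hypothesis a_linr : forall (c : R) w v1 v2, a w (c *: v1 + v2) = c * a w v1 + a w v2.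
Hypothesis a_bound : forall w v, `|a w v| <= Ca * ipnorm ipX w * ipnorm ipY v.

(* Quasi-optimality: if z in S is tested like y on T and (S, T) satisfies the
   inf-sup condition with constant gamma, then ||z||^2 <= (Ca / gamma)^2 ||y||^2;
   indeed gamma ||z|| ||v|| <= a z v = a y v <= Ca ||y|| ||v|| for the best v. *)
Lemma quasi_optimality (S : set X) (T : set Y) gamma z y :
  0 < gamma -> infsup_ge ipX ipY a S T gamma -> S z ->
  (forall v, T v -> a z v = a y v) ->
  ipnorm ipX z ^+ 2 <= Ca ^+ 2 / gamma ^+ 2 * ipnorm ipX y ^+ 2.
Proof.
move=> g0 Hinf Sz Hzy.
have [->|nz] := eqVneq z 0.
  by rewrite ipnorm0 // expr0n /= mulr_ge0 ?divr_ge0 ?sqr_ge0.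
have zp := ipnorm_gt0 ipX_inner nz.
have : gamma <= Ca * ipnorm ipX y / ipnorm ipX z.
  apply: (sup_le_ubound _ (Hinf z Sz nz) g0) => _ [v [Tv nv] <-].
  have vp := ipnorm_gt0 ipY_inner nv.
  rewrite ler_pdivrMr ?mulr_gt0 //.
  have -> : Ca * ipnorm ipX y / ipnorm ipX z * (ipnorm ipX z * ipnorm ipY v)
          = Ca * ipnorm ipX y * ipnorm ipY v by field; rewrite gt_eqF.
  by rewrite Hzy //; apply: le_trans (ler_norm _) (a_bound _ _).
rewrite ler_pdivlMr // => gz.
have gz0 : 0 <= gamma * ipnorm ipX z by rewrite mulr_ge0 // ltW.
rewrite mulrAC ler_pdivlMr ?exprn_gt0 //; nra.
Qed.

Lemma infsup_kernel (S : set X) (T : set Y) gamma z :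
  0 < gamma -> infsup_ge ipX ipY a S T gamma -> S z ->
  (forall v, T v -> a z v = 0) -> z = 0.
Proof.
move=> g0 Hinf Sz Hz; apply/eqP; apply: contraT => nz.
have tested_like_0 v : T v -> a z v = a 0 v.
  by move=> Tv; rewrite Hz // (lin0 (fun c w1 w2 => a_linl c w1 w2 v)).
have := quasi_optimality g0 Hinf Sz tested_like_0.
by rewrite ipnorm0 // expr0n /= mulr0 leNgt exprn_gt0 // ipnorm_gt0.
Qed.

Lemma galerkin_quasi_opt (S : set X) (T : set Y) gamma (uS x y : X) :
  0 < gamma -> infsup_ge ipX ipY a S T gamma -> subspace S -> S uS -> S x ->
  (forall v, T v -> a uS v = a y v) ->
  ipnorm ipX (uS - x) ^+ 2 <= Ca ^+ 2 / gamma ^+ 2 * ipnorm ipX (y - x) ^+ 2.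
Proof.
move=> g0 Hinf S_sub SuS Sx Hgal; apply: (quasi_optimality g0 Hinf (subB S_sub SuS Sx)).
by move=> v Tv; rewrite !(linB (fun c w1 w2 => a_linl c w1 w2 v)) Hgal.
Qed.

Lemma galerkin_mul n (wX : 'I_n -> X) (wY : 'I_n -> Y) (c : 'cV[R]_n) r :
  (galerkin_matrix a wX wY *m c) r 0 = a (\sum_t c t 0 *: wX t) (wY r).
Proof.
rewrite (lin_sum (fun c w1 w2 => a_linl c w1 w2 (wY r))) mxE.
by apply: eq_bigr => t _; rewrite mxE mulrC.
Qed.

Variables (l N : nat) (Xs : nat -> set X) (Ys : nat -> set Y) (d : nat -> nat).
Variables (wX : 'I_(d N.+1) -> X) (wY : 'I_(d N.+1) -> Y).
Hypothesis Xs_dim : forall k, (k <= N.+1)%N -> has_dim (Xs (l + k)%N) (d k).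
Hypothesis Ys_dim : forall k, (k <= N.+1)%N -> has_dim (Ys (l + k)%N) (d k).
Hypothesis Xs_nest : forall k, (k <= N)%N -> Xs (l + k)%N `<=` Xs (l + k.+1)%N.
Hypothesis Ys_nest : forall k, (k <= N)%N -> Ys (l + k)%N `<=` Ys (l + k.+1)%N.
Hypothesis wX_onb : nested_onb ipX Xs l N d wX.
Hypothesis wY_onb : nested_onb ipY Ys l N d wY.

Lemma galerkin_matrix_coords k x r : (k <= N.+1)%N -> Xs (l + k)%N x ->
  (galerkin_matrix a wX wY *m coords ipX wX k x) r 0 = a x (wY r).
Proof.
by move=> kN Hx; rewrite galerkin_mul -(coords_expand ipX_inner Xs_dim Xs_nest wX_onb kN Hx).
Qed.

Lemma galerkin_matrix_unit gamma : 0 < gamma ->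
  infsup_ge ipX ipY a (Xs (l + N.+1)%N) (Ys (l + N.+1)%N) gamma ->
  galerkin_matrix a wX wY \in unitmx.
Proof.
move=> g0 Hinf; set M := galerkin_matrix a wX wY.
suff M_inj (c : 'cV[R]_(d N.+1)) : M *m c = 0 -> c = 0.
  rewrite -unitmx_tr -row_free_unit; apply: inj_row_free => v Hv.
  by apply: trmx_inj; rewrite trmx0; apply: M_inj; rewrite -[M]trmxK -trmx_mul Hv trmx0.
move=> Mc0; set x := \sum_t c t 0 *: wX t.
have Xx : Xs (l + N.+1)%N x.
  apply: sub_sum => [|t]; first by case: (Xs_dim (leqnn N.+1)).
  by right; apply: (w_in_k Xs_dim Xs_nest wX_onb (leqnn _) (ltn_ord t)).
have x0 : x = 0.
  apply: (infsup_kernel g0 Hinf Xx) => v Yv.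
  rewrite (coords_expand ipY_inner Ys_dim Ys_nest wY_onb (leqnn _) Yv).
  rewrite (lin_sum (a_linr ^~ x)) big1 // => r _.
  by rewrite -galerkin_mul -/M Mc0 !mxE mulr0.
apply/matrixP => t j; rewrite ord1 mxE.
by rewrite -(coef_rep ipX_inner Xs_dim Xs_nest wX_onb (fun t => c t 0) t) -/x x0
  (lin0 (ipl ipX_inner (wX t))).
Qed.
End Galerkin.

Unset Implicit Arguments. Set Strict Implicit. Set Printing Implicit Defensive.
Theorem mainTheorem4 (R : realType) (X Y : lmodType R)
  (ipX : X -> X -> R) (ipY : Y -> Y -> R)
  (HX : hilbert ipX) (HY : hilbert ipY)
  (a : X -> Y -> R)
  (Ha1 : forall (c : R) w1 w2 v, a (c *: w1 + w2) v = c * a w1 v + a w2 v)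
  (Ha2 : forall (c : R) w v1 v2, a w (c *: v1 + v2) = c * a w v1 + a w v2)
  (Ca : R)
  (Hbd : forall w v, `|a w v| <= Ca * ipnorm ipX w * ipnorm ipY v)
  (f : Y -> R)
  (Hflin : forall (c : R) v1 v2, f (c *: v1 + v2) = c * f v1 + f v2)
  (Hfbd : exists Cf : R, forall v, `|f v| <= Cf * ipnorm ipY v)
  (u : X) (Hu : forall v, a u v = f v)
  (l N : nat) (Xs : nat -> set X) (Ys : nat -> set Y) (d : nat -> nat)
  (HXdim : forall k, (k <= N.+1)%N -> has_dim (Xs (l + k)%N) (d k))
  (HYdim : forall k, (k <= N.+1)%N -> has_dim (Ys (l + k)%N) (d k))
  (HXnest : forall k, (k <= N)%N -> Xs (l + k)%N `<=` Xs (l + k.+1)%N)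
  (HYnest : forall k, (k <= N)%N -> Ys (l + k)%N `<=` Ys (l + k.+1)%N)
  (gamma : R) (Hgamma : 0 < gamma)
  (Hinfsup : forall k, (k <= N.+1)%N ->
      infsup_ge ipX ipY a (Xs (l + k)%N) (Ys (l + k)%N) gamma)
  (us : nat -> X)
  (Hus : forall k, (k <= N.+1)%N ->
      Xs (l + k)%N (us (l + k)%N) /\
      forall v, Ys (l + k)%N v -> a (us (l + k)%N) v = f v)
  (wX : 'I_(d N.+1) -> X) (wY : 'I_(d N.+1) -> Y)
  (HwX : nested_onb ipX Xs l N d wX) (HwY : nested_onb ipY Ys l N d wY)
  (L U : 'M[R]_(d N.+1))
  (HL : block_lower_unit d N L) (HU : block_upper d N U)
  (HLU : galerkin_matrix a wX wY = L *m U) :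
  \sum_(l <= k < l + N.+1) ipnorm ipX (us k.+1 - us k) ^+ 2
    <= Ca ^+ 2 / gamma ^+ 2 * specnorm U ^+ 2
       * (\big[Num.max/0]_(1 <= k < N.+2) specnorm (block_col d (invmx U) k) ^+ 2)
       * ipnorm ipX (u - us l) ^+ 2.
Proof.
have [[HipX _] [HipY _]] := (HX, HY).
have d_mono := dim_mono HXdim HXnest.
pose c k := coords ipX wX k (us (l + k)%N).
pose g := invmx L *m \col_r f (wY r).
have /andP [Lu Uu] : (L \in unitmx) && (U \in unitmx).
  by rewrite -unitmx_mul -HLU (galerkin_matrix_unit HipX HipY Ha1 Ha2 Hbd HXdim HYdim
    HXnest HYnest HwX HwY Hgamma (Hinfsup _ (leqnn _))).
have Uc k : (k <= N.+1)%N -> U *m c k = trunc k g.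
  move=> kN; apply: (block_LU_solve d_mono HL HU Lu kN) => [t kt|r rk].
    by rewrite mxE ltnNge kt.
  rewrite -HLU (galerkin_matrix_coords HipX Ha1 wY HXdim HXnest HwX _ kN (Hus k kN).1) mxE.
  exact: (Hus k kN).2 _ (w_in_k HYdim HYnest HwY kN rk).
have dist i j : (i <= N.+1)%N -> (j <= N.+1)%N ->
    ipnorm ipX (us (l + i)%N - us (l + j)%N) ^+ 2 = vnorm (c i - c j) ^+ 2.
  by move=> iN jN; apply: (coords_isometry HipX HXdim HXnest HwX iN jN (Hus _ iN).1 (Hus _ jN).1).
have incr (k : 'I_N.+1) : ipnorm ipX (us (l + k).+1 - us (l + k)%N) ^+ 2
    = vnorm (invmx U *m (trunc k.+1 g - trunc k g)) ^+ 2.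
  have kN : (k <= N.+1)%N := ltnW (ltn_ord k).
  by rewrite -addnS dist // -(Uc _ (ltn_ord k)) -(Uc _ kN) -mulmxBr mulKmx.
rewrite -sum_shift addKn (eq_bigr _ (fun k _ => incr k)).
apply: le_trans (block_sum_bound d_mono _ _) _.
(* the squared norm of g off block 0 is ||U (c_(N+1) - c_0)||^2 <= ||U||^2 ||u_(l+N+1) - u_l||^2 *)
have tail : vnorm (trunc N.+1 g - trunc 0 g) ^+ 2
    <= specnorm U ^+ 2 * (Ca ^+ 2 / gamma ^+ 2 * ipnorm ipX (u - us l) ^+ 2).
  rewrite -!Uc // -mulmxBr; apply: le_trans (spec_bound_sq _ _) _.
  rewrite -dist // addn0 ler_wpM2l ?sqr_ge0 //.
  have [XN _] := HXdim _ (leqnn N.+1).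
  apply: (galerkin_quasi_opt HipX HipY Ha1 Hbd Hgamma (Hinfsup _ (leqnn _)) XN
    (Hus _ (leqnn _)).1) => [|v Yv]; last by rewrite Hu (Hus _ (leqnn _)).2.
  apply: (nest_le HXnest (leq0n _) (leqnn _)).
  by have := (Hus 0%N isT).1; rewrite !addn0.
apply: le_trans (ler_wpM2l (bigmax_ge_id _ _ _ _) tail) _.
by rewrite le_eqVlt; apply/orP; left; apply/eqP; ring.
Qed.
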